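(* Let $H$ be the graph with vertices $u_1,u_2,v_1,v_2$ and edges $u_1v_1$, $u_2v_2$, $u_2v_1$ (the balanced Thick-$\mathcal{Z}$ graph with $|U_1|=|V_1|=|U_2|=|V_2|=1$). For any randomized online algorithm for online bipartite matching in the random edge arrival model, even one that knows $H$ in advance, the expected size of its matching on $H$ is at most $\frac53$, while the maximum matching has size $2$; hence no such algorithm achieves a competitive ratio greater than $\frac56$ on this instance.
   Context: Online bipartite matching in the random edge arrival model: the edges of a fixed bipartite graph arrive one at a time in a uniformly random order; upon each arrival the algorithm irrevocably decides whether to add the edge to its matching, which must remain a matching. Expectations are over the order and the algorithm's coins. *)

From mathcomp Require Import all_boot all_order all_algebra perm.
Set Implicit Arguments. Unset Strict Implicit. Unset Printing Implicit Defensive.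
Import Order.TTheory GRing.Theory Num.Theory.

(* Information model: the algorithm knows the graph up to isomorphism but
   vertices are anonymous; when the k-th edge arrives it observes, for each
   previously arrived edge, whether that edge shares its U-endpoint and
   whether it shares its V-endpoint.  (This is the full isomorphism type of
   the arrival history.)  A deterministic online algorithm maps the
   observed history (including the current arrival) to accept/reject.
   An accepted edge is added only if the result is still a matching
   (an algorithm may check this itself from its observations). *)

Definition observation := (seq bool * seq bool)%type.
Definition det_alg := seq observation -> bool.

Section Online.
Variables (U V E : finType) (eu : E -> U) (ev : E -> V).

Definition observe (pre : seq E) (e : E) : observation :=
  ([seq eu f == eu e | f <- pre], [seq ev f == ev e | f <- pre]).

Definition compatible (M : seq E) (e : E) : bool :=
  all (fun f => (eu f != eu e) && (ev f != ev e)) M.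

Fixpoint run_aux (alg : det_alg) (pre : seq E) (hist : seq observation)
    (M : seq E) (rest : seq E) : seq E :=
  match rest with
  | [::] => M
  | e :: r =>
      let h := rcons hist (observe pre e) in
      let M' := if alg h && compatible M e then rcons M e else M in
      run_aux alg (rcons pre e) h M' r
  end.

Definition run (alg : det_alg) (arrivals : seq E) : seq E :=
  run_aux alg [::] [::] [::] arrivals.

Definition arrival (s : {perm E}) : seq E := [seq s e | e <- enum E].

Definition det_expected (R : numFieldType) (alg : det_alg) : R :=
  (\sum_(s : {perm E}) (size (run alg (arrival s)))%:R) / (#|E|`!)%:R.

(* A randomized algorithm: a probability distribution (weights w over a
   finite index type I) over deterministic algorithms. *)
Definition rand_expected (R : numFieldType) (I : finType) (w : I -> R)
    (algs : I -> det_alg) : R :=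
  \sum_(i : I) w i * det_expected R (algs i).

Definition is_matching (M : {set E}) : bool :=
  [forall e in M, forall f in M, (e != f) ==> ((eu e != eu f) && (ev e != ev f))].

Definition max_matching_size : nat :=
  \max_(M : {set E} | is_matching M) #|M|.

End Online.

(* The graph H: vertices u1,u2 (U = 'I_2) and v1,v2 (V = 'I_2);
   edges 0 = u1v1, 1 = u2v2, 2 = u2v1. *)
Definition H_eu (e : 'I_3) : 'I_2 := if val e == 0 then ord0 else ord_max.
Definition H_ev (e : 'I_3) : 'I_2 := if val e == 1 then ord_max else ord0.

From mathcomp Require Import all_boot all_order all_algebra perm.
Import Order.TTheory GRing.Theory Num.Theory.

Set Implicit Arguments.
Unset Strict Implicit.
Unset Printing Implicit Defensive.

(* The first arrival is observed as an empty history, so the first decision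
   [alg [:: ([::], [::])]] is the same for every arrival order. If it accepts,
   the two orders starting with u2v1 end with u2v1 alone, since u2v1 meets both
   other edges. If it rejects, the orders u1v1,u2v1,u2v2 and u2v2,u2v1,u1v1
   leave only u2v1 and one further edge, which u2v1 blocks. Either way two of
   the six orders yield a matching of size at most 1 and the others at most 2,
   so the expected size is at most 10/6 = 5/3. *)

Section OnlineBounds.
Variables (U V E : finType) (eu : E -> U) (ev : E -> V).

Lemma run_aux_cons alg pre hist M e rest :
  run_aux eu ev alg pre hist M (e :: rest) =
  run_aux eu ev alg (rcons pre e) (rcons hist (observe eu ev pre e))
    (if alg (rcons hist (observe eu ev pre e)) && compatible eu ev M e
     then rcons M e else M) rest.
Proof. by []. Qed.

Lemma run_aux_blocked alg pre hist M rest :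
  (forall e, ~~ compatible eu ev M e) -> run_aux eu ev alg pre hist M rest = M.
Proof.
move=> blocked; elim: rest pre hist => [|e rest IH] pre hist //=.
by rewrite (negbTE (blocked e)) andbF IH.
Qed.

Lemma size_run_aux_le alg pre hist M rest :
  (size (run_aux eu ev alg pre hist M rest) <= size M + size rest)%N.
Proof.
elim: rest pre hist M => [|e rest IH] pre hist M /=; first by rewrite addn0.
apply: leq_trans (IH _ _ _) _; rewrite addnS -addSn leq_add2r.
by case: ifP; rewrite ?size_rcons.
Qed.

Lemma compatible_notin_eu M e : compatible eu ev M e -> eu e \notin map eu M.
Proof.
move=> /allP comp; apply/mapP => -[f fM eq_e_f].
by have /andP[] := comp f fM; rewrite eq_e_f eqxx.
Qed.

Lemma uniq_eu_run_aux alg pre hist M rest :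
  uniq (map eu M) -> uniq (map eu (run_aux eu ev alg pre hist M rest)).
Proof.
elim: rest pre hist M => [|e rest IH] pre hist M //= uM; apply: IH.
case: ifP => [/andP[_ comp]|_] //.
by rewrite map_rcons rcons_uniq compatible_notin_eu.
Qed.

Lemma size_run_le_card alg s : (size (run eu ev alg s) <= #|U|)%N.
Proof.
have uM : uniq (map eu (run eu ev alg s)) by apply: uniq_eu_run_aux.
by rewrite -(size_map eu) -(card_uniqP uM) max_card.
Qed.

Lemma matching_card_le M : is_matching eu ev M -> (#|M| <= #|U|)%N.
Proof.
move=> /forall_inP matM; rewrite -(card_in_imset (f := eu)) ?max_card //.
move=> x y xM yM eq_xy; apply/eqP/negPn/negP => neq_xy.
by have /forall_inP/(_ y yM) := matM x xM; rewrite neq_xy eq_xy eqxx.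
Qed.

Lemma rand_expected_le (R : realFieldType) (I : finType) (w : I -> R) algs (b : R) :
  (forall i, 0 <= w i)%R -> (\sum_i w i = 1)%R ->
  (forall i, det_expected eu ev R (algs i) <= b)%R ->
  (rand_expected eu ev w algs <= b)%R.
Proof.
move=> w_ge0 w_sum1 det_le; rewrite -[b]mul1r -w_sum1 mulr_suml.
by apply: ler_sum => i _; rewrite ler_wpM2l.
Qed.

End OnlineBounds.

Definition u1v1 : 'I_3 := @Ordinal 3 0 isT.
Definition u2v2 : 'I_3 := @Ordinal 3 1 isT.
Definition u2v1 : 'I_3 := @Ordinal 3 2 isT.

Lemma I3P (x : 'I_3) : [\/ x = u1v1, x = u2v2 | x = u2v1].
Proof.
case: x => -[|[|[|m]]] lt //;
  [constructor 1 | constructor 2 | constructor 3]; exact: val_inj.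
Qed.

Lemma u2v1_blocks e : ~~ compatible H_eu H_ev [:: u2v1] e.
Proof. by case: (I3P e) => ->. Qed.

Lemma size_run_first_accepted (alg : det_alg) s :
  alg [:: ([::], [::])] -> (size (run H_eu H_ev alg (u2v1 :: s)) <= 1)%N.
Proof.
by move=> acc; rewrite /run run_aux_cons acc run_aux_blocked //; exact: u2v1_blocks.
Qed.

Lemma size_run_first_rejected (alg : det_alg) x y :
  ~~ alg [:: ([::], [::])] -> (size (run H_eu H_ev alg [:: x; u2v1; y]) <= 1)%N.
Proof.
move=> /negbTE rej; rewrite /run run_aux_cons rej run_aux_cons.
case: ifP => _; last exact: size_run_aux_le.
by rewrite run_aux_blocked //; exact: u2v1_blocks.
Qed.

Definition arrival_orders : seq (seq 'I_3) :=
  [:: [:: u1v1; u2v2; u2v1]; [:: u1v1; u2v1; u2v2]; [:: u2v2; u1v1; u2v1];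
      [:: u2v2; u2v1; u1v1]; [:: u2v1; u1v1; u2v2]; [:: u2v1; u2v2; u1v1]].

Lemma arrivalE (s : {perm 'I_3}) : arrival s = [:: s u1v1; s u2v2; s u2v1].
Proof.
have enum_I3 : enum 'I_3 = [:: u1v1; u2v2; u2v1].
  by apply: (inj_map val_inj); rewrite val_enum_ord.
by rewrite /arrival enum_I3.
Qed.

Lemma arrival_inj : injective (@arrival 'I_3).
Proof.
move=> s t; rewrite !arrivalE => -[s0 s1 s2]; apply/permP => x.
by case: (I3P x) => ->.
Qed.

Lemma arrival_in_orders s : arrival s \in arrival_orders.
Proof.
rewrite arrivalE.
have: [&& s u1v1 != s u2v2, s u1v1 != s u2v1 & s u2v2 != s u2v1].
  by rewrite !(inj_eq perm_inj).
by case: (I3P (s u1v1)) => ->; case: (I3P (s u2v2)) => ->;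
  case: (I3P (s u2v1)) => ->.
Qed.

Lemma perm_arrival_orders :
  perm_eq [seq arrival s | s <- enum {perm 'I_3}] arrival_orders.
Proof.
have uniq_arrivals : uniq [seq arrival s | s <- enum {perm 'I_3}].
  by rewrite map_inj_uniq ?enum_uniq //; exact: arrival_inj.
have sub_orders : {subset [seq arrival s | s <- enum {perm 'I_3}] <= arrival_orders}.
  by move=> l /mapP[s _ ->]; exact: arrival_in_orders.
have [|_ eq_orders] := uniq_min_size uniq_arrivals sub_orders.
  by rewrite size_map -cardE card_Sn.
exact: uniq_perm.
Qed.

Lemma sum_size_run_le (alg : det_alg) :
  (\sum_(s : {perm 'I_3}) size (run H_eu H_ev alg (arrival s)) <= 10)%N.
Proof.
rewrite -big_enum -(big_map (@arrival _) xpredT (fun l => size (run H_eu H_ev alg l))).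
rewrite (perm_big _ perm_arrival_orders) !big_cons big_nil.
have le2 l : (size (run H_eu H_ev alg l) <= 2)%N.
  by have := size_run_le_card H_eu H_ev alg l; rewrite card_ord.
have [acc | rej] := boolP (alg [:: ([::], [::])]).
- apply: (@leq_trans (2 + (2 + (2 + (2 + (1 + (1 + 0))))))) => //.
  by repeat apply: leq_add; rewrite ?le2 ?(size_run_first_accepted _ acc).
- apply: (@leq_trans (2 + (1 + (2 + (1 + (2 + (2 + 0))))))) => //.
  by repeat apply: leq_add; rewrite ?le2 ?(size_run_first_rejected _ _ rej).
Qed.

Lemma max_matching_size_H : max_matching_size H_eu H_ev = 2%N.
Proof.
apply/eqP; rewrite eqn_leq; apply/andP; split.
  by apply/bigmax_leqP => M /matching_card_le; rewrite card_ord.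
have matching_u1v1_u2v2 : is_matching H_eu H_ev [set u1v1; u2v2].
  by apply/forall_inP => x /set2P[] ->; apply/forall_inP => y /set2P[] ->.
by apply: leq_trans (leq_bigmax_cond _ matching_u1v1_u2v2); rewrite cards2.
Qed.

Local Open Scope ring_scope.

Lemma det_expected_H_le (R : realFieldType) (alg : det_alg) :
  det_expected H_eu H_ev R alg <= 5%:R / 3%:R.
Proof.
rewrite /det_expected -natr_sum card_ord.
rewrite ler_pdivrMr ?ltr0n // mulrAC -natrM ler_pdivlMr ?ltr0n // -natrM ler_nat.
by rewrite (leq_trans (leq_mul (sum_size_run_le alg) (leqnn 3))).
Qed.

Theorem lemma11 (R : realFieldType) (I : finType) (w : I -> R)
    (algs : I -> det_alg) :
  (forall i, 0 <= w i) -> \sum_(i : I) w i = 1 ->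
  [/\ rand_expected H_eu H_ev w algs <= 5%:R / 3%:R,
      max_matching_size H_eu H_ev = 2%N &
      rand_expected H_eu H_ev w algs
        <= 5%:R / 6%:R * (max_matching_size H_eu H_ev)%:R].
Proof.
move=> w_ge0 w_sum1.
have le_5_3 : rand_expected H_eu H_ev w algs <= 5%:R / 3%:R.
  by apply: rand_expected_le => // i; exact: det_expected_H_le.
have six : 6%:R = 3%:R * 2%:R :> R by rewrite -natrM.
rewrite max_matching_size_H six invfM mulrA -mulrA mulVf ?pnatr_eq0 // mulr1.
by split.
Qed.
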